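(* Let $S$ be a finite state space, let $P\in\mathbb{R}^{|S|\times|S|}$ be a row-stochastic matrix, let $\gamma\in[0,1)$, $\beta\in(0,1)$, and let $R\in\mathbb{R}^{|S|}$. Let $d_\mu\in\mathbb{R}^{|S|}$ be a probability vector, and define $f$ by $f^\top = d_\mu^\top (I-\beta P)^{-1}$; assume $f(s)>0$ for all $s\in S$. Let $\kappa = \min_{s\in S} \frac{d_\mu(s)}{f(s)}$. Let $T:\mathbb{R}^{|S|}\to\mathbb{R}^{|S|}$ be $T(V)=R+\gamma P V$, and let $\Pi_f$ be the orthogonal projection, with respect to the $f$-weighted Euclidean norm $\|v\|_f=\sqrt{\sum_s f(s)v(s)^2}$, onto a fixed linear subspace of $\mathbb{R}^{|S|}$ (the span of the feature vectors). If $\beta>\gamma^2(1-\kappa)$, then for all $v_1,v_2\in\mathbb{R}^{|S|}$, $$\|\Pi_f T v_1-\Pi_f T v_2\|_f\le \sqrt{\tfrac{\gamma^2}{\beta}(1-\kappa)}\,\|v_1-v_2\|_f,$$ i.e. $\Pi_f T$ is a $\sqrt{\frac{\gamma^2}{\beta}(1-\kappa)}$-contraction in the $f$-weighted norm.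
   Context: Setting: a finite Markov decision process with target policy $\pi$ and behavior policy $\mu$; $P$ and $R$ are the transition matrix and reward vector induced by the target policy $\pi$, and $d_\mu$ is the stationary distribution over states induced by the behavior policy $\mu$. The vector $f$ is called the emphatic weight vector and $\kappa$ measures the discrepancy between target and behavior policies. The subspace onto which $\Pi_f$ projects is the span of the columns of $\Phi^\top$, where $\Phi$ is the matrix whose columns are the feature vectors $\phi(s)\in\mathbb{R}^n$. *)

From mathcomp Require Import all_boot all_order all_algebra.
Set Implicit Arguments. Unset Strict Implicit. Unset Printing Implicit Defensive.
Import Order.TTheory GRing.Theory Num.Theory.
Local Open Scope ring_scope.

Definition row_stochastic (R : numDomainType) (n : nat) (P : 'M[R]_n) : Prop :=
  (forall i j, 0 <= P i j) /\ (forall i, \sum_j P i j = 1).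

Definition prob_vector (R : numDomainType) (n : nat) (d : 'cV[R]_n) : Prop :=
  (forall i, 0 <= d i 0) /\ \sum_i d i 0 = 1.

Definition emphatic_weight (R : fieldType) (n : nat) (beta : R)
  (P : 'M[R]_n) (d : 'cV[R]_n) : 'cV[R]_n :=
  (d^T *m invmx (1%:M - beta *: P))^T.

(* kappa = min_s d(s) / f(s)   (n > 0 so the min is over a nonempty set) *)
Definition kappa (R : realFieldType) (n : nat) (d f : 'cV[R]_n.+1) : R :=
  \big[Num.min/ d ord0 0 / f ord0 0]_(s < n.+1) (d s 0 / f s 0).

Definition fdot (R : numDomainType) (n : nat) (f u v : 'cV[R]_n) : R :=
  \sum_s f s 0 * u s 0 * v s 0.
Definition fnorm (R : rcfType) (n : nat) (f v : 'cV[R]_n) : R :=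
  Num.sqrt (\sum_s f s 0 * (v s 0) ^+ 2).

Definition bellman (R : ringType) (n : nat) (Rw : 'cV[R]_n) (gamma : R)
  (P : 'M[R]_n) (V : 'cV[R]_n) : 'cV[R]_n := Rw + gamma *: (P *m V).

Definition in_span (R : ringType) (n k : nat) (Phi : 'M[R]_(n, k)) (y : 'cV[R]_n) : Prop :=
  exists c : 'cV[R]_k, y = Phi *m c.

Definition is_f_orth_proj (R : numDomainType) (n k : nat) (f : 'cV[R]_n)
  (Phi : 'M[R]_(n, k)) (Pi : 'cV[R]_n -> 'cV[R]_n) : Prop :=
  forall v, in_span Phi (Pi v) /\
            (forall w, in_span Phi w -> fdot f (v - Pi v) w = 0).

From mathcomp Require Import all_boot all_order all_algebra.
From mathcomp Require Import ring lra.
Set Implicit Arguments. Unset Strict Implicit. Unset Printing Implicit Defensive.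
Import Order.TTheory GRing.Theory Num.Theory.
Local Open Scope ring_scope.

(* The emphatic weight satisfies f = d + beta P^T f, so beta P^T f = f - d <= (1 - kappa) f
   entrywise.  By Jensen's inequality on the rows of P, ||P u||_f^2 <= sum_j (P^T f)_j u_j^2,
   hence beta ||P u||_f^2 <= (1 - kappa) ||u||_f^2.  Since T v1 - T v2 = gamma P (v1 - v2)
   and the f-orthogonal projection is nonexpansive by Pythagoras, the bound follows. *)

Section FDot.

Variables (R : realDomainType) (n : nat).
Implicit Types (f g h u v x y z : 'cV[R]_n) (a : R).

Lemma fdotBl f x y z : fdot f (x - y) z = fdot f x z - fdot f y z.
Proof. by rewrite /fdot -sumrB; apply: eq_bigr => i _; rewrite !mxE mulrBr mulrBl. Qed.

Lemma fdotZl f a u v : fdot f (a *: u) v = a * fdot f u v.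
Proof. by rewrite /fdot mulr_sumr; apply: eq_bigr => i _; rewrite !mxE; ring. Qed.

Lemma fdotZr f a u v : fdot f u (a *: v) = a * fdot f u v.
Proof. by rewrite /fdot mulr_sumr; apply: eq_bigr => i _; rewrite !mxE; ring. Qed.

Lemma fdot_weightZ a f u v : fdot (a *: f) u v = a * fdot f u v.
Proof. by rewrite /fdot mulr_sumr; apply: eq_bigr => i _; rewrite !mxE -!mulrA. Qed.

Lemma fdot_self_ge0 f u : (forall s, 0 <= f s 0) -> 0 <= fdot f u u.
Proof. by move=> f0; apply: sumr_ge0 => s _; rewrite -mulrA -expr2 mulr_ge0 ?sqr_ge0. Qed.

Lemma fdot_weight_le g h u :
  (forall s, g s 0 <= h s 0) -> fdot g u u <= fdot h u u.
Proof. by move=> gh; apply: ler_sum => s _; rewrite -!mulrA -expr2 ler_wpM2r ?sqr_ge0. Qed.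

Lemma fdot_orth_le f x y :
  (forall s, 0 <= f s 0) -> fdot f (x - y) y = 0 -> fdot f y y <= fdot f x x.
Proof.
move=> f0 orth.
have -> : fdot f x x = fdot f (x - y) (x - y) + 2 * fdot f (x - y) y + fdot f y y.
  rewrite /fdot mulr_sumr -!big_split /=; apply: eq_bigr => i _; rewrite !mxE; ring.
by rewrite orth mulr0 addr0 lerDr fdot_self_ge0.
Qed.

End FDot.

Lemma fnormE (R : rcfType) n (f v : 'cV[R]_n) : fnorm f v = Num.sqrt (fdot f v v).
Proof. by congr Num.sqrt; apply: eq_bigr => s _; rewrite expr2 mulrA. Qed.

Lemma fnorm_le (R : rcfType) n (f u w : 'cV[R]_n) (c : R) :
  (forall s, 0 <= f s 0) -> fdot f w w <= c * fdot f u u ->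
  fnorm f w <= Num.sqrt c * fnorm f u.
Proof.
move=> f0 le_wu; rewrite !fnormE mulrC -sqrtrM ?fdot_self_ge0 //.
by rewrite ler_wsqrtr // mulrC.
Qed.

Lemma in_spanB (R : nzRingType) n k (Phi : 'M[R]_(n, k)) x y :
  in_span Phi x -> in_span Phi y -> in_span Phi (x - y).
Proof. by move=> [cx ->] [cy ->]; exists (cx - cy); rewrite mulmxBr. Qed.

Lemma f_orth_proj_sub_le (R : realDomainType) n k (f : 'cV[R]_n) (Phi : 'M[R]_(n, k)) Pi a b :
  (forall s, 0 <= f s 0) -> is_f_orth_proj f Phi Pi ->
  fdot f (Pi a - Pi b) (Pi a - Pi b) <= fdot f (a - b) (a - b).
Proof.
move=> f0 proj; have [span_a orth_a] := proj a; have [span_b orth_b] := proj b.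
apply: fdot_orth_le => //.
have -> : a - b - (Pi a - Pi b) = (a - Pi a) - (b - Pi b).
  by apply/matrixP => i j; rewrite !mxE; ring.
have span_ab := in_spanB span_a span_b.
by rewrite fdotBl orth_a // orth_b // subrr.
Qed.

Lemma bellmanB (R : nzRingType) n (Rw : 'cV[R]_n) gamma P v1 v2 :
  bellman Rw gamma P v1 - bellman Rw gamma P v2 = gamma *: (P *m (v1 - v2)).
Proof. by rewrite /bellman opprD addrACA subrr add0r -scalerBr -mulmxBr. Qed.

Lemma sqr_convex_comb_le (R : realDomainType) n (p x : 'I_n -> R) :
  (forall j, 0 <= p j) -> \sum_j p j = 1 ->
  (\sum_j p j * x j) ^+ 2 <= \sum_j p j * x j ^+ 2.
Proof.
move=> p0 p1; set m := \sum_j p j * x j.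
have var_ge0 : 0 <= \sum_j p j * (x j - m) ^+ 2.
  by apply: sumr_ge0 => j _; rewrite mulr_ge0 ?sqr_ge0.
have expand : \sum_j p j * (x j - m) ^+ 2 =
    \sum_j p j * x j ^+ 2 - 2 * m * m + m ^+ 2 * \sum_j p j.
  rewrite (eq_bigr (fun j => p j * x j ^+ 2 - 2 * m * (p j * x j) + m ^+ 2 * p j));
    last by move=> j _; ring.
  by rewrite big_split sumrB -!mulr_sumr.
move: var_ge0; rewrite expand p1 -/m; nra.
Qed.

Section Stochastic.

Variables (R : realFieldType) (n : nat) (P : 'M[R]_n).
Hypothesis stochP : row_stochastic P.

Lemma stochastic_l1_le (v : 'rV[R]_n) : \sum_j `|(v *m P) 0 j| <= \sum_j `|v 0 j|.
Proof.
have [P0 P1] := stochP.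
apply: (@le_trans _ _ (\sum_j \sum_i `|v 0 i| * P i j)).
  apply: ler_sum => j _; rewrite mxE; apply: (le_trans (ler_norm_sum _ _ _)).
  by apply: ler_sum => i _; rewrite normrM (ger0_norm (P0 i j)).
by rewrite exchange_big /=; apply: ler_sum => i _; rewrite -mulr_sumr P1 mulr1.
Qed.

Lemma stochastic_resolvent_unitmx beta :
  0 <= beta -> beta < 1 -> (1%:M - beta *: P) \in unitmx.
Proof.
move=> b0 b1; rewrite -row_free_unit -kermx_eq0; apply/rowV0P => v /sub_kermxP.
rewrite mulmxBr mulmx1 -scalemxAr => /eqP; rewrite subr_eq0 => /eqP v_fix.
set S := \sum_j `|v 0 j|.
have S_le : S <= beta * S.
  rewrite {1}/S {1}v_fix; apply: le_trans (ler_wpM2l b0 (stochastic_l1_le v)).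
  by rewrite mulr_sumr; apply: ler_sum => j _; rewrite mxE normrM ger0_norm.
have S_ge0 : 0 <= S by apply: sumr_ge0.
have S0 : S = 0 by nra.
apply/matrixP => i j; rewrite mxE ord1.
by apply/eqP; rewrite -normr_eq0; apply/eqP; apply: (psumr_eq0P _ S0).
Qed.

Lemma fdot_stochastic_le (f u : 'cV[R]_n) :
  (forall s, 0 <= f s 0) -> fdot f (P *m u) (P *m u) <= fdot (P^T *m f) u u.
Proof.
have [P0 P1] := stochP; move=> f0.
have -> : fdot (P^T *m f) u u = \sum_s f s 0 * \sum_j P s j * u j 0 ^+ 2.
  rewrite /fdot; under [RHS]eq_bigr do rewrite mulr_sumr.
  rewrite [RHS]exchange_big /=; apply: eq_bigr => j _; rewrite !mxE !mulr_suml.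
  by apply: eq_bigr => s _; rewrite !mxE; ring.
apply: ler_sum => s _; rewrite -mulrA -expr2 mxE ler_wpM2l //.
exact: sqr_convex_comb_le.
Qed.

Lemma emphatic_weightE beta d :
  0 <= beta -> beta < 1 ->
  emphatic_weight beta P d = d + beta *: (P^T *m emphatic_weight beta P d).
Proof.
move=> b0 b1; set f := emphatic_weight beta P d.
have resolvent : (1%:M - beta *: P)^T *m f = d.
  rewrite -[f]trmxK -trmx_mul /f /emphatic_weight trmxK -mulmxA.
  by rewrite mulVmx ?stochastic_resolvent_unitmx // mulmx1 trmxK.
rewrite -{1}resolvent linearB /= trmx1 linearZ /= mulmxBl mul1mx -scalemxAl.
by rewrite subrK.
Qed.

End Stochastic.

Lemma kappa_mul_le (R : realFieldType) n (d f : 'cV[R]_n.+1) j :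
  (forall s, 0 < f s 0) -> kappa d f * f j 0 <= d j 0.
Proof. by move=> fpos; rewrite -ler_pdivlMr //; exact: bigmin_le. Qed.

Lemma emphatic_fdot_le (R : realFieldType) n (P : 'M[R]_n.+1) beta d u :
  row_stochastic P -> 0 <= beta -> beta < 1 ->
  (forall s, 0 < emphatic_weight beta P d s 0) ->
  beta * fdot (emphatic_weight beta P d) (P *m u) (P *m u)
  <= (1 - kappa d (emphatic_weight beta P d)) * fdot (emphatic_weight beta P d) u u.
Proof.
move=> stochP b0 b1 fpos; set f := emphatic_weight beta P d in fpos *.
have f0 s : 0 <= f s 0 by exact: ltW.
apply: (le_trans (ler_wpM2l b0 (fdot_stochastic_le stochP u f0))).
rewrite -!fdot_weightZ; apply: fdot_weight_le => s.
have kappa_le := kappa_mul_le d s fpos.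
have -> : (beta *: (P^T *m f)) s 0 = f s 0 - d s 0.
  by rewrite {2}/f (emphatic_weightE stochP) // -/f !mxE addrC addrK.
rewrite [X in _ <= X]mxE; lra.
Qed.

Theorem theorem1 (R : rcfType) (n k : nat) (P : 'M[R]_n.+1) (gamma beta : R)
  (Rw : 'cV[R]_n.+1) (d : 'cV[R]_n.+1) (Phi : 'M[R]_(n.+1, k))
  (Pi : 'cV[R]_n.+1 -> 'cV[R]_n.+1) :
  row_stochastic P ->
  0 <= gamma -> gamma < 1 ->
  0 < beta -> beta < 1 ->
  prob_vector d ->
  (forall s, 0 < emphatic_weight beta P d s 0) ->
  is_f_orth_proj (emphatic_weight beta P d) Phi Pi ->
  beta > gamma ^+ 2 * (1 - kappa d (emphatic_weight beta P d)) ->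
  forall v1 v2 : 'cV[R]_n.+1,
    fnorm (emphatic_weight beta P d)
      (Pi (bellman Rw gamma P v1) - Pi (bellman Rw gamma P v2))
    <= Num.sqrt (gamma ^+ 2 / beta * (1 - kappa d (emphatic_weight beta P d)))
       * fnorm (emphatic_weight beta P d) (v1 - v2).
Proof.
move=> stochP _ _ b0 b1 _ fpos proj _ v1 v2.
have P_le := emphatic_fdot_le (v1 - v2) stochP (ltW b0) b1 fpos.
set f := emphatic_weight beta P d in fpos proj P_le *.
set K := kappa d f in P_le *.
have f0 s : 0 <= f s 0 by exact: ltW.
apply: fnorm_le => //; apply: (le_trans (f_orth_proj_sub_le _ _ f0 proj)).
rewrite bellmanB fdotZl fdotZr mulrA -expr2.
have -> : gamma ^+ 2 / beta * (1 - K) * fdot f (v1 - v2) (v1 - v2) =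
          gamma ^+ 2 * ((1 - K) * fdot f (v1 - v2) (v1 - v2) / beta) by ring.
by rewrite ler_wpM2l ?sqr_ge0 // ler_pdivlMr // mulrC.
Qed.
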